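(* Let $p\in(0,1)$ and let $X$, $\gamma$ satisfy the standing assumptions in the context. Then $\inf\{\mathrm{VaR}_p(g(X)):g\in\mathcal G_{\rm cm}\}=-\infty$. Hence the problem of minimizing $\mathrm{VaR}_p(g(X))$ over $g\in\mathcal G_{\rm cm}$ admits no solution.
   Context: $(\Omega,\mathcal F,\mathbb P)$ is atomless. $\mathrm{VaR}_p(Y)=\inf\{x:\mathbb P(Y\le x)\ge p\}$. Standing assumptions: $X\ge0$ is a random variable whose distribution has a positive density on its support; $\gamma:\mathbb R\to\mathbb R$ is continuous and strictly positive with $\mathbb E[\gamma(X)]=1$ and $\mathbb E[\gamma(X)X]<\infty$. With $\mathcal G_1$ the measurable functions $\mathbb R\to\mathbb R$ and a budget $x_0\in\mathbb R$, $\mathcal G_{\rm cm}=\{g\in\mathcal G_1:\mathbb E[\gamma(X)g(X)]\ge x_0\}$. *)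

From HB Require Import structures.
From mathcomp Require Import all_boot all_order all_algebra.
From mathcomp Require Import all_classical all_reals all_analysis.
Set Implicit Arguments. Unset Strict Implicit. Unset Printing Implicit Defensive.
Import Order.TTheory GRing.Theory Num.Theory.
Import numFieldNormedType.Exports.
Local Open Scope classical_set_scope.
Local Open Scope ring_scope.
Local Open Scope ereal_scope.

Definition atomless {R : realType} {d : measure_display} {T : measurableType d}
  (P : probability T R) : Prop :=
  forall A : set T, measurable A -> 0 < P A ->
    exists B : set T, [/\ measurable B, B `<=` A, 0 < P B & P B < P A].

Definition VaR {R : realType} {d : measure_display} {T : measurableType d}
  (P : probability T R) (p : R) (Y : T -> R) : \bar R :=
  ereal_inf [set x%:E | x in [set x : R | p%:E <= P [set w | (Y w <= x)%R]]].

Definition law_support {R : realType} {d : measure_display} {T : measurableType d}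
  (P : probability T R) (X : T -> R) : set R :=
  [set x | forall e : R, (0 < e)%R ->
     0 < P (X @^-1` `](x - e)%R, (x + e)%R[)].

Definition has_pos_density {R : realType} {d : measure_display} {T : measurableType d}
  (P : probability T R) (X : T -> R) : Prop :=
  exists f : R -> R,
    [/\ measurable_fun setT f,
        (forall x, (0 <= f x)%R),
        (forall A : set R, measurable A ->
           P (X @^-1` A) = \int[lebesgue_measure]_(x in A) (f x)%:E) &
        (forall x, law_support P X x -> (0 < f x)%R)].

Definition G_cm {R : realType} {d : measure_display} {T : measurableType d}
  (P : probability T R) (X : T -> R) (gamma : R -> R) (x0 : R) : set (R -> R) :=
  [set g | [/\ measurable_fun setT g,
              P.-integrable setT (fun w => (gamma (X w) * g (X w))%:E) &
              x0%:E <= \int[P]_w (gamma (X w) * g (X w))%:E]].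

(* Choose a level a with P(X <= a) = p exactly: the law of X has a density,
   so its distribution function is continuous.  For any M, the payoff
   g = M + K 1_(a, +oo) / gamma costs E[gamma(X) g(X)] = M + K (1 - p), which
   meets the budget x0 once K is large, while g(X) = M on the event {X <= a}
   of probability p; hence VaR_p(g(X)) <= M.  On the other hand VaR_p of a
   real random variable is never -oo when p > 0, so the infimum -oo is not
   attained. *)

From HB Require Import structures.
From mathcomp Require Import all_boot all_order all_algebra.
From mathcomp Require Import all_classical all_reals all_analysis.
From mathcomp Require Import measurable_realfun ring.
Import Order.TTheory GRing.Theory Num.Theory.
Import numFieldNormedType.Exports.
Local Open Scope classical_set_scope.
Local Open Scope ring_scope.
Local Open Scope ereal_scope.

Section sublevel_probability.
Context {d} {T : measurableType d} {R : realType} (P : probability T R).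
Context {Y : T -> R}.
Hypothesis mY : measurable_fun setT Y.

Let Yrv : {RV P >-> R} :=
  MeasurableFun.Pack (MeasurableFun.Class (isMeasurableFun.Build _ _ _ _ _ mY)).

Let cdfE : cdf Yrv = fun r => P [set w | (Y w <= r)%R].
Proof.
apply/funext => r; rewrite /cdf /distribution /pushforward; apply: congr1.
by apply/seteqP; split => w; rewrite /= in_itv.
Qed.

Lemma measurable_sublevel r : measurable [set w | (Y w <= r)%R].
Proof. by rewrite -[X in measurable X]setTI; apply: measurable_fun_le. Qed.

Lemma prob_sublevel_nondecreasing :
  nondecreasing_fun (fun r => P [set w | (Y w <= r)%R]).
Proof. by rewrite -cdfE; exact: cdf_nondecreasing. Qed.

Lemma prob_sublevel_right_continuous :
  right_continuous (fun r => P [set w | (Y w <= r)%R]).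
Proof. by rewrite -cdfE; exact: cdf_right_continuous. Qed.

Lemma exists_prob_sublevel_lt p : (0 < p)%R ->
  exists r, P [set w | (Y w <= r)%R] < p%:E.
Proof.
move=> p0; apply/not_existsP => pF.
suff : p%:E <= 0 by rewrite lee_fin leNgt p0.
apply: cvge_ge (cvg_cdfNy0 Yrv); apply: nearW => r.
by rewrite cdfE leNgt; apply/negP.
Qed.

Lemma exists_prob_sublevel_ge p : (p < 1)%R ->
  exists r, p%:E <= P [set w | (Y w <= r)%R].
Proof.
move=> p1; apply/not_existsP => pF.
suff : 1 <= p%:E by rewrite lee_fin leNgt p1.
apply: cvge_le (cvg_cdfy1 Yrv); apply: nearW => r.
by rewrite cdfE; apply/ltW; rewrite ltNge; apply/negP.
Qed.

Let strict_sublevelE a : [set w | (Y w < a)%R] =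
  \bigcup_n [set w | (Y w <= a - n.+1%:R^-1)%R].
Proof.
apply/seteqP; split => w /=.
  by move=> /ltr_add_invr[n]; exists n => //=; rewrite lerBrDr ltW.
by move=> [n _] /le_lt_trans; apply; rewrite ltrBlDr ltrDl.
Qed.

Lemma cvg_prob_sublevel_left a :
  P [set w | (Y w <= a - n.+1%:R^-1)%R] @[n --> \oo] --> P [set w | (Y w < a)%R].
Proof.
rewrite strict_sublevelE.
apply: nondecreasing_cvg_mu => [n|| m n mn]; first exact: measurable_sublevel.
  by apply: bigcup_measurable => n _; exact: measurable_sublevel.
apply/subsetPset => w /= /le_trans; apply.
by rewrite lerD2l lerN2 lef_pV2 ?posrE // ler_nat.
Qed.

Lemma prob_sublevel_split a : P [set w | (Y w <= a)%R] =
  P [set w | (Y w < a)%R] + P (Y @^-1` [set a]).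
Proof.
rewrite -measureU.
- apply: congr1; apply/seteqP; split => w /=.
    by rewrite le_eqVlt => /orP[/eqP ->|]; [right|left].
  by case=> [/ltW|->].
- rewrite strict_sublevelE; apply: bigcup_measurable => n _.
  exact: measurable_sublevel.
- by rewrite -[X in measurable X]setTI; exact: mY.
- by apply/seteqP; split => // w /= [+ wa]; rewrite wa ltxx.
Qed.

Lemma VaR_gtNy p : (0 < p)%R -> -oo < VaR P p Y.
Proof.
move=> p0; have [r Fr] := exists_prob_sublevel_lt _ p0.
apply: (@lt_le_trans _ _ r%:E); first exact: ltNyr.
apply: le_ereal_inf_tmp => _ [x px <-]; rewrite lee_fin leNgt; apply/negP => xr.
have := le_trans px (prob_sublevel_nondecreasing _ _ (ltW xr)).
by rewrite leNgt Fr.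
Qed.

Lemma exists_prob_sublevel_eq p : (0 < p < 1)%R ->
  (forall a, P (Y @^-1` [set a]) = 0) ->
  exists a, P [set w | (Y w <= a)%R] = p%:E.
Proof.
move=> /andP[p0 p1] Y_atomless.
pose S := [set a | p%:E <= P [set w | (Y w <= a)%R]].
have [r0 Fr0] := exists_prob_sublevel_lt _ p0.
have S_lb : lbound S r0.
  move=> s Ss; rewrite leNgt; apply/negP => sr0.
  have := le_trans Ss (prob_sublevel_nondecreasing _ _ (ltW sr0)).
  by rewrite leNgt Fr0.
have S_inf : has_inf S.
  by have [r Fr] := exists_prob_sublevel_ge _ p1; split; [exists r | exists r0].
(* a := inf S: right continuity gives p <= F(a), and since there is no atom at
   a, F(a) = P(Y < a) is a limit of values F(r) < p with r < a. *)
exists (inf S); apply/eqP; rewrite eq_le; apply/andP; split.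
  rewrite prob_sublevel_split Y_atomless adde0.
  apply: cvge_le (cvg_prob_sublevel_left (inf S)); apply: nearW => n.
  apply/ltW; rewrite ltNge; apply/negP => /(ge_inf S_inf.2).
  by rewrite lerBrDr gerDl leNgt invr_gt0 ltr0Sn.
apply: cvge_ge (prob_sublevel_right_continuous (inf S)).
apply: filterS (nbhs_right_gt (inf S)) => r Sr.
have [s Ss] : exists2 s, S s & (s < inf S + (r - inf S))%R.
  by apply: inf_adherent => //; rewrite subr_gt0.
rewrite addrC subrK => sr.
exact: le_trans Ss (prob_sublevel_nondecreasing _ _ (ltW sr)).
Qed.

End sublevel_probability.

Lemma VaR_le {d} {T : measurableType d} {R : realType} (P : probability T R)
    (p : R) (Y : T -> R) (r : R) :
  p%:E <= P [set w | (Y w <= r)%R] -> VaR P p Y <= r%:E.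
Proof. by move=> pr; apply: ereal_inf_lbound; exists r. Qed.

Lemma has_pos_density_atomless {d} {T : measurableType d} {R : realType}
    {P : probability T R} {X : T -> R} :
  has_pos_density P X -> forall a, P (X @^-1` [set a]) = 0.
Proof.
move=> [f [mf _ Pf _]] a; rewrite Pf //.
apply: null_set_integral => //; last exact: lebesgue_measure_set1.
by apply/measurable_EFinP; exact: measurable_funTS.
Qed.

Section tail_lift.
Context {d} {T : measurableType d} {R : realType} (P : probability T R).
Context {X : T -> R} {gamma : R -> R}.
Hypotheses (mX : measurable_fun setT X) (gamma_cont : continuous gamma).
Hypothesis gamma_gt0 : forall x, (0 < gamma x)%R.
Hypothesis int_gammaX : \int[P]_w (gamma (X w))%:E = 1.

Definition lift_tail (a K M : R) (x : R) : R :=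
  (M + K * \1_`]a, +oo[ x / gamma x)%R.

Lemma measurable_lift_tail a K M : measurable_fun setT (lift_tail a K M).
Proof.
apply: measurable_funD; first exact: measurable_cst.
apply: measurable_funM; last first.
  apply: continuous_measurable_fun => x.
  by apply: continuousV; [rewrite gt_eqF | exact: gamma_cont].
by apply: measurable_funM; [exact: measurable_cst | exact: measurable_indic].
Qed.

Lemma gamma_lift_tail a K M x :
  (gamma x * lift_tail a K M x = M * gamma x + K * \1_`]a, +oo[ x)%R.
Proof. by rewrite /lift_tail; field; rewrite gt_eqF. Qed.

Let tail a := X @^-1` `]a, +oo[.

Let measurable_tail a : measurable (tail a).
Proof. by rewrite -[X in measurable X]setTI; exact: mX. Qed.

Let integrable_gammaX : P.-integrable setT (fun w => (gamma (X w))%:E).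
Proof.
apply/integrableP; split.
  apply/measurable_EFinP; apply: measurableT_comp mX.
  exact: continuous_measurable_fun.
under eq_integral do rewrite gee0_abs ?lee_fin ?(ltW (gamma_gt0 _)) //.
by rewrite int_gammaX ltry.
Qed.

Let gamma_lift_tailE a K M :
  (fun w => (gamma (X w) * lift_tail a K M (X w))%:E) =
  (EFin \o (fun w => M * gamma (X w))%R) \+ (EFin \o (fun w => K * \1_(tail a) w)%R).
Proof. by apply/funext => w; rewrite gamma_lift_tail. Qed.

Let integrable_scaled_gammaX M :
  P.-integrable setT (EFin \o (fun w => M * gamma (X w))%R).
Proof. exact: (eq_integrable _ _ _ _ (integrableZl _ M integrable_gammaX)). Qed.

Let integrable_scaled_tail a K :
  P.-integrable setT (EFin \o (fun w => K * \1_(tail a) w)%R).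
Proof.
exact: (eq_integrable _ _ _ _ (integrableZl _ K (integrable_indic P (measurable_tail a)))).
Qed.

Lemma integrable_gamma_lift_tail a K M :
  P.-integrable setT (fun w => (gamma (X w) * lift_tail a K M (X w))%:E).
Proof. by rewrite gamma_lift_tailE; exact: integrableD. Qed.

Lemma integral_gamma_lift_tail a K M :
  \int[P]_w (gamma (X w) * lift_tail a K M (X w))%:E =
  M%:E + K%:E * P (X @^-1` `]a, +oo[).
Proof.
rewrite gamma_lift_tailE integralD_EFin //.
under eq_integral do rewrite /= EFinM.
rewrite integralZl // int_gammaX mule1; congr (_ + _).
under eq_integral do rewrite /= EFinM.
by rewrite integralZl ?integral_indic ?setIT //; exact: integrable_indic.
Qed.

Lemma lift_tail_VaR_le x0 p a M : (p < 1)%R ->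
  P [set w | (X w <= a)%R] = p%:E ->
  exists2 g, G_cm P X gamma x0 g & VaR P p (g \o X) <= M%:E.
Proof.
move=> p1 Fa.
have Ptail : P (X @^-1` `]a, +oo[) = (1 - p)%:E.
  rewrite (_ : X @^-1` _ = ~` [set w | (X w <= a)%R]).
    by rewrite probability_setC ?Fa //; exact: measurable_sublevel.
  by apply/seteqP; split => w /=; rewrite in_itv /= andbT ltNge => /negP.
pose K := (`|x0 - M| / (1 - p))%R.
exists (lift_tail a K M).
  split; [exact: measurable_lift_tail | exact: integrable_gamma_lift_tail |].
  rewrite integral_gamma_lift_tail Ptail -EFinM -EFinD lee_fin /K.
  by rewrite divfK ?subr_eq0 ?gt_eqF // -lerBlDl ler_norm.
apply: VaR_le; rewrite -Fa; apply: le_measure; rewrite ?inE.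
- exact: measurable_sublevel.
- by apply: measurable_sublevel; apply: measurableT_comp mX; exact: measurable_lift_tail.
- move=> w /= Xa; rewrite /lift_tail indicE memNset ?mulr0 ?mul0r ?addr0 //.
  by apply/negP; rewrite in_itv /= andbT ltNge Xa.
Qed.

End tail_lift.

Theorem proposition3 (R : realType) (d : measure_display) (Omega : measurableType d)
  (P : probability Omega R) (X : Omega -> R) (gamma : R -> R) (x0 p : R) :
  atomless P ->
  measurable_fun setT X ->
  (forall w, (0 <= X w)%R) ->
  has_pos_density P X ->
  continuous gamma ->
  (forall x, (0 < gamma x)%R) ->
  \int[P]_w (gamma (X w))%:E = 1 ->
  \int[P]_w (gamma (X w) * X w)%:E < +oo ->
  (0 < p < 1)%R ->
  ereal_inf [set VaR P p (g \o X) | g in G_cm P X gamma x0] = -oo /\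
  ~ (exists2 g, G_cm P X gamma x0 g &
       forall h, G_cm P X gamma x0 h -> VaR P p (g \o X) <= VaR P p (h \o X)).
Proof.
move=> _ mX _ X_density gamma_cont gamma_gt0 int_gammaX _ p01.
have [a Fa] := exists_prob_sublevel_eq P mX _ p01 (has_pos_density_atomless X_density).
have VaR_unbounded M : exists2 g, G_cm P X gamma x0 g & VaR P p (g \o X) <= M%:E.
  exact: lift_tail_VaR_le mX gamma_cont gamma_gt0 int_gammaX _ _ _ _ (andP p01).2 Fa.
split.
  apply: eq_ninfty => M; have [g Gg gM] := VaR_unbounded M.
  by apply: le_trans gM; apply: ereal_inf_lbound; exists g.
move=> [g [mg _ _] g_min].
have := VaR_gtNy P (measurableT_comp mg mX) _ (andP p01).1.
suff -> : VaR P p (g \o X) = -oo by [].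
apply: eq_ninfty => M; have [h Gh hM] := VaR_unbounded M.
exact: le_trans (g_min h Gh) hM.
Qed.
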